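(* Let $\alpha \in (0,1)$ be an algebraic number with minimal pair $(p(x),q(x))$. If the additive monoid $M_\alpha = \{f(\alpha) \mid f(x) \in \mathbb{N}_0[x,x^{-1}]\}$ satisfies the ACCP, then $p(x) - Q(x)q(x) \notin \mathbb{N}_0[x,x^{-1}]$ for every nonzero Laurent polynomial $Q(x) \in \mathbb{N}_0[x,x^{-1}]$.
   Context: $\mathbb{N}_0[x,x^{-1}]$ denotes the semiring of Laurent polynomials with coefficients in $\mathbb{N}_0$. For a monic polynomial $f(x) \in \mathbb{Q}[x]$, let $\ell$ be the smallest positive integer with $\ell f(x) \in \mathbb{Z}[x]$; the minimal pair of $f$ is the unique pair $(p(x),q(x))$ with $p,q \in \mathbb{N}_0[x]$, $\ell f = p - q$, and $p,q$ having no monomials of the same degree in common. The minimal pair of a real algebraic number is the minimal pair of its minimal polynomial over $\mathbb{Q}$. A monoid $M$ satisfies the ACCP (ascending chain condition on principal ideals) if every ascending chain of principal ideals $x_1 + M \subseteq x_2 + M \subseteq \cdots$ eventually stabilizes. *)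

From HB Require Import structures.
From mathcomp Require Import all_boot all_order all_algebra.
From mathcomp Require Import reals.
Set Implicit Arguments. Unset Strict Implicit. Unset Printing Implicit Defensive.
Import Order.TTheory GRing.Theory Num.Theory.
Local Open Scope ring_scope.

Definition coefs_nonneg (P : {poly int}) : Prop := forall i : nat, 0 <= P`_i.

(* Laurent polynomials with integer coefficients: the pair (k, P) represents
   x^(-k) * P(x). *)
Definition laurent := (nat * {poly int})%type.

Definition laurent_of_poly (P : {poly int}) : laurent := (0%N, P).

(* x^-k1 P1 - x^-k2 P2 = x^-(k1+k2) (x^k2 P1 - x^k1 P2) *)
Definition laurent_sub (A B : laurent) : laurent :=
  ((fst A + fst B)%N, 'X^(fst B) * snd A - 'X^(fst A) * snd B).

Definition laurent_mul (A B : laurent) : laurent :=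
  ((A.1 + B.1)%N, A.2 * B.2).

(* A Laurent polynomial is zero iff its polynomial part is zero. *)
Definition laurent_nonzero (A : laurent) : Prop := A.2 != 0.

(* Membership in N0[x, x^-1] (independent of the representative). *)
Definition in_N0_laurent (A : laurent) : Prop := coefs_nonneg A.2.

Definition laurent_eval (R : realType) (A : laurent) (a : R) : R :=
  (map_poly intr A.2).[a] / a ^+ A.1.

Definition M_alpha (R : realType) (a : R) : R -> Prop :=
  fun r => exists A : laurent, in_N0_laurent A /\ r = laurent_eval A a.

(* ACCP for an additive submonoid M of R: principal ideals are y + M, and
   x + M ⊆ y + M iff x ∈ y + M. *)
Definition ACCP (R : realType) (M : R -> Prop) : Prop :=
  forall s : nat -> R,
    (forall n, M (s n)) ->
    (forall n, exists m, M m /\ s n = s n.+1 + m) ->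
    exists N : nat, forall n : nat, (N <= n)%N ->
      exists m, M m /\ s n.+1 = s n + m.

Definition is_minpoly_Q (R : realType) (a : R) (f : {poly rat}) : Prop :=
  f \is monic /\ irreducible_poly f /\ root (map_poly ratr f) a.

Definition is_denom (f : {poly rat}) (l : nat) : Prop :=
  (0 < l)%N /\ (exists g : {poly int}, map_poly intr g = l%:R *: f) /\
  (forall l' : nat, (0 < l')%N ->
     (exists g : {poly int}, map_poly intr g = l'%:R *: f) -> (l <= l')%N).

Definition is_minimal_pair (f : {poly rat}) (p q : {poly int}) : Prop :=
  exists l : nat, is_denom f l /\
    map_poly intr (p - q) = l%:R *: f /\
    coefs_nonneg p /\ coefs_nonneg q /\
    (forall i : nat, p`_i = 0 \/ q`_i = 0).

(* Put c = q(a) > 0 and L = p - Q q.  Since p(a) = q(a), we have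
   c = Q(a) c + L(a).  If L had nonnegative coefficients and L(a) > 0, the
   principal ideals Q(a)^n c + M_a would form a strictly ascending chain.
   Hence L(a) = 0, so Q(a) = 1; then ACCP forces Q = 1, since otherwise 1
   splits in M_a into two nonzero summands.  But then L = p - q, which is
   nonzero because f is. *)

From HB Require Import structures.
From mathcomp Require Import all_boot all_order all_algebra.
From mathcomp Require Import reals.
From mathcomp Require Import ring.
Set Implicit Arguments.
Unset Strict Implicit.
Unset Printing Implicit Defensive.

Import Order.TTheory GRing.Theory Num.Theory.
Local Open Scope ring_scope.

Lemma coefs_nonneg_mul (P Q : {poly int}) :
  coefs_nonneg P -> coefs_nonneg Q -> coefs_nonneg (P * Q).
Proof. by move=> P_ge0 Q_ge0 i; rewrite coefM sumr_ge0 // => j _; rewrite mulr_ge0. Qed.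

Lemma coefs_nonneg_subXn_lead (P : {poly int}) :
  coefs_nonneg P -> P != 0 -> coefs_nonneg (P - 'X^((size P).-1)).
Proof.
move=> P_ge0 P_neq0 i; rewrite coefB coefXn.
case: eqP => [->|_]; last by rewrite subr0.
have lead_gt0 : 0 < lead_coef P by rewrite lt_def lead_coef_eq0 P_neq0 lead_coefE P_ge0.
by rewrite subr_ge0 -gtz0_ge1 -lead_coefE.
Qed.

Section HornerNonneg.
Variables (R : numDomainType) (P : {poly int}) (a : R).
Hypothesis P_ge0 : coefs_nonneg P.

Lemma horner_coefs_nonneg_ge0 : 0 <= a -> 0 <= (map_poly intr P).[a].
Proof.
move=> a_ge0; rewrite horner_coef sumr_ge0 // => i _.
by rewrite coef_map mulr_ge0 ?exprn_ge0 // ler0z.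
Qed.

Lemma horner_coefs_nonneg_eq0 : 0 < a -> ((map_poly intr P).[a] == 0) = (P == 0).
Proof.
move=> a_gt0; apply/idP/idP => [|/eqP->]; last by rewrite rmorph0 horner0.
rewrite horner_coef size_map_inj_poly //; last exact: intr_inj.
move=> /eqP/psumr_eq0P term_eq0; apply: contraT => P_neq0.
have lead_lt : ((size P).-1 < size P)%N by rewrite ltn_predL size_poly_gt0.
have /(_ (Ordinal lead_lt) isT)/eqP : forall i : 'I_(size P), true ->
    (map_poly intr P)`_i * a ^+ i = 0 :> R.
  by apply: term_eq0 => i _; rewrite coef_map mulr_ge0 ?exprn_ge0 ?ler0z // ltW.
rewrite coef_map mulf_eq0 expf_eq0 (gt_eqF a_gt0) andbF orbF intr_eq0 /=.
by rewrite -lead_coefE lead_coef_eq0 (negPf P_neq0).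
Qed.

End HornerNonneg.

Section AffineFixpoint.
Variables (R : realType) (M : R -> Prop).
Hypothesis M_ge0 : forall x, M x -> 0 <= x.
Hypothesis M_mul : forall x y, M x -> M y -> M (x * y).

(* The principal ideals u^n c + M ascend strictly, as u^n c = u^(n+1) c + u^n v. *)
Lemma affine_fixpoint_not_ACCP c u v : M c -> M u -> M v -> 0 < u -> 0 < v ->
  c = u * c + v -> ~ ACCP M.
Proof.
move=> Mc Mu Mv u_gt0 v_gt0 c_fix accp.
have M_exprn x n : M x -> M (u ^+ n * x).
  by move=> Mx; elim: n => [|n IHn]; rewrite ?mul1r // exprS -mulrA; apply: M_mul.
have step n : u ^+ n * c = u ^+ n.+1 * c + u ^+ n * v.
  by rewrite {1}c_fix mulrDr exprSr mulrA.
have [N chain_stable] := accp (fun n => u ^+ n * c) (fun n => M_exprn c n Mc)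
  (fun n => ex_intro _ _ (conj (M_exprn v n Mv) (step n))).
have [m [Mm back]] := chain_stable N (leqnn N).
have := step N; rewrite back -addrA -{1}(addr0 (u ^+ N * c)) => /addrI /eqP.
by rewrite eq_sym gt_eqF // ltr_wpDl ?M_ge0 // mulr_gt0 ?exprn_gt0.
Qed.

Lemma ACCP_one_indecomposable u v : ACCP M -> M 1 -> M u -> M v ->
  u + v = 1 -> u = 0 \/ v = 0.
Proof.
move=> accp M1 Mu Mv uv1.
have [u_eq0|u_neq0] := eqVneq u 0; [by left | right].
have [v_eq0|v_neq0] := eqVneq v 0; first by [].
exfalso; apply: (affine_fixpoint_not_ACCP M1 Mu Mv _ _ _ accp).
- by rewrite lt_def u_neq0 M_ge0.
- by rewrite lt_def v_neq0 M_ge0.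
- by rewrite mulr1.
Qed.

End AffineFixpoint.

Section LaurentEval.
Variables (R : realType) (a : R).
Hypothesis a_gt0 : 0 < a.

Let a_neq0 : a != 0 := lt0r_neq0 a_gt0.

Lemma laurent_eval_of_poly P : laurent_eval (laurent_of_poly P) a = (map_poly intr P).[a].
Proof. by rewrite /laurent_eval expr0 divr1. Qed.

Lemma laurent_eval_mul A B :
  laurent_eval (laurent_mul A B) a = laurent_eval A a * laurent_eval B a.
Proof. by rewrite /laurent_eval /= rmorphM hornerM exprD invfM mulrACA. Qed.

Lemma laurent_eval_sub A B :
  laurent_eval (laurent_sub A B) a = laurent_eval A a - laurent_eval B a.
Proof.
rewrite /laurent_eval /= rmorphB !rmorphM /= !map_polyXn hornerD hornerN.
rewrite !hornerM !hornerXn exprD; field.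
by rewrite !expf_neq0.
Qed.

Lemma laurent_eval_ge0 A : in_N0_laurent A -> 0 <= laurent_eval A a.
Proof.
by move=> A_N0; rewrite divr_ge0 ?exprn_ge0 ?horner_coefs_nonneg_ge0 // ltW.
Qed.

Lemma laurent_eval_eq0 A : in_N0_laurent A -> (laurent_eval A a == 0) = (A.2 == 0).
Proof.
move=> A_N0; rewrite mulf_eq0 invr_eq0 expf_eq0 (negPf a_neq0) andbF orbF.
exact: horner_coefs_nonneg_eq0.
Qed.

Lemma M_alpha_laurent_eval A : in_N0_laurent A -> M_alpha a (laurent_eval A a).
Proof. by exists A. Qed.

Lemma M_alpha_ge0 x : M_alpha a x -> 0 <= x.
Proof. by move=> [A [A_N0 ->]]; apply: laurent_eval_ge0. Qed.

Lemma M_alpha_mul x y : M_alpha a x -> M_alpha a y -> M_alpha a (x * y).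
Proof.
move=> [A [A_N0 ->]] [B [B_N0 ->]]; exists (laurent_mul A B).
by split; [apply: coefs_nonneg_mul | rewrite laurent_eval_mul].
Qed.

(* With x^j the leading monomial of Q = x^-k P, we get 1 = a^j / a^k + (Q - x^(j-k))(a),
   so ACCP kills the second summand; then a^j = a^k forces j = k. *)
Lemma ACCP_laurent_eval_eq1 Q : a != 1 -> ACCP (M_alpha a) ->
  in_N0_laurent Q -> laurent_eval Q a = 1 -> Q.2 = 'X^(Q.1).
Proof.
case: Q => k P a_neq1 accp P_N0 P_eval1; rewrite /in_N0_laurent /= in P_N0 *.
have P_neq0 : P != 0.
  by rewrite -(laurent_eval_eq0 (P_N0 : in_N0_laurent (k, P))) // P_eval1 oner_eq0.
have M1 : M_alpha a 1 by rewrite -P_eval1; apply: M_alpha_laurent_eval.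
set j := (size P).-1.
have lead_N0 : in_N0_laurent (k, 'X^j) by move=> i; rewrite coefXn ler0n.
have rest_N0 : in_N0_laurent (k, P - 'X^j) by apply: coefs_nonneg_subXn_lead.
have eval_split : laurent_eval (k, 'X^j) a + laurent_eval (k, P - 'X^j) a = 1.
  by rewrite /laurent_eval /= rmorphB -mulrDl hornerD hornerN addrC subrK.
have [lead_eq0 | rest_eq0] := ACCP_one_indecomposable M_alpha_ge0 M_alpha_mul accp M1
  (M_alpha_laurent_eval lead_N0) (M_alpha_laurent_eval rest_N0) eval_split.
  by move/eqP: lead_eq0; rewrite laurent_eval_eq0 //= -size_poly_eq0 size_polyXn.
have P_eq : P = 'X^j.
  by apply/eqP; rewrite -subr_eq0 -(laurent_eval_eq0 rest_N0) rest_eq0.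
have j_eq_k : j = k.
  apply: (ieexprIn a_gt0 a_neq1); apply: (divIf (expf_neq0 k a_neq0)).
  by rewrite divff ?expf_neq0 // -P_eval1 /laurent_eval P_eq map_polyXn hornerXn.
by rewrite P_eq j_eq_k.
Qed.

End LaurentEval.

Section MinimalPair.
Variables (R : realType) (a : R) (f : {poly rat}) (p q : {poly int}).
Hypothesis pq_minimal : is_minimal_pair f p q.

Lemma minimal_pair_neq : f != 0 -> p != q.
Proof.
have [l [[l_gt0 _] [pq_f _]]] := pq_minimal.
apply: contraNneq => p_eq_q; move: pq_f; rewrite p_eq_q subrr rmorph0 => /esym/eqP.
by rewrite scaler_eq0 pnatr_eq0 eqn0Ngt l_gt0.
Qed.

Lemma minimal_pair_horner_eq : root (map_poly ratr f) a ->
  (map_poly intr p).[a] = (map_poly intr q).[a] :> R.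
Proof.
have [l [_ [pq_f _]]] := pq_minimal; move=> /rootP f_root.
have intr_ratr g : map_poly intr g = map_poly ratr (map_poly intr g) :> {poly R}.
  by rewrite -map_poly_comp; apply: eq_map_poly => z /=; rewrite ratr_int.
have : (map_poly intr (p - q)).[a] = 0 :> R.
  by rewrite intr_ratr pq_f map_polyZ hornerZ f_root mulr0.
by rewrite rmorphB hornerD hornerN => /eqP; rewrite subr_eq0 => /eqP.
Qed.

Lemma minimal_pair_horner_gt0 : 0 < a -> is_minpoly_Q a f ->
  0 < (map_poly intr q).[a] :> R.
Proof.
move=> a_gt0 [f_monic [_ f_root]]; have [l [_ [_ [p_ge0 [q_ge0 _]]]]] := pq_minimal.
rewrite lt_def horner_coefs_nonneg_ge0 ?ltW // andbT horner_coefs_nonneg_eq0 //.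
apply: contraNneq (minimal_pair_neq (monic_neq0 f_monic)) => q_eq0.
apply/eqP; rewrite q_eq0; apply/eqP.
rewrite -(horner_coefs_nonneg_eq0 p_ge0 a_gt0) minimal_pair_horner_eq // q_eq0.
by rewrite rmorph0 horner0.
Qed.

End MinimalPair.

Theorem proposition4p1 (R : realType) (a : R) (f : {poly rat}) (p q : {poly int}) :
  0 < a -> a < 1 ->
  is_minpoly_Q a f ->
  is_minimal_pair f p q ->
  ACCP (M_alpha a) ->
  forall Q : laurent, in_N0_laurent Q -> laurent_nonzero Q ->
    ~ in_N0_laurent (laurent_sub (laurent_of_poly p)
                                 (laurent_mul Q (laurent_of_poly q))).
Proof.
move=> a_gt0 a_lt1 f_minpoly pq_minimal accp Q Q_N0 Q_neq0 L_N0.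
set L := laurent_sub _ _ in L_N0.
have [_ [_ [_ [_ [q_ge0 _]]]]] := pq_minimal.
set c := (map_poly intr q).[a].
have c_gt0 : 0 < c := minimal_pair_horner_gt0 pq_minimal a_gt0 f_minpoly.
have c_fix : c = laurent_eval Q a * c + laurent_eval L a.
  rewrite laurent_eval_sub // laurent_eval_mul !laurent_eval_of_poly //.
  by rewrite (minimal_pair_horner_eq pq_minimal) ?f_minpoly.2.2 // addrC subrK.
have [L_gt0 | L_le0] := ltrP 0 (laurent_eval L a).
  have M_c : M_alpha a c.
    by rewrite /c -laurent_eval_of_poly; apply: (M_alpha_laurent_eval a); exact: q_ge0.
  have Q_gt0 : 0 < laurent_eval Q a.
    by rewrite lt_def laurent_eval_eq0 // Q_neq0 laurent_eval_ge0.
  exact: (affine_fixpoint_not_ACCP (M_alpha_ge0 a_gt0) (@M_alpha_mul _ a) M_c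
    (M_alpha_laurent_eval a Q_N0) (M_alpha_laurent_eval a L_N0) Q_gt0 L_gt0 c_fix accp).
have L_eq0 : laurent_eval L a = 0 by apply/le_anti; rewrite L_le0 laurent_eval_ge0.
have Q_eval1 : laurent_eval Q a = 1.
  by apply: (mulIf (lt0r_neq0 c_gt0)); rewrite mul1r {2}c_fix L_eq0 addr0.
have Q_eq := ACCP_laurent_eval_eq1 a_gt0 (negbT (lt_eqF a_lt1)) accp Q_N0 Q_eval1.
move/eqP: L_eq0; rewrite laurent_eval_eq0 // /L /= Q_eq.
rewrite addn0 expr0 mul1r -mulrBr mulf_eq0 expf_eq0 polyX_eq0 andbF /= subr_eq0.
by apply/negP; apply: minimal_pair_neq pq_minimal (monic_neq0 f_minpoly.1).
Qed.
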